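(* Let $\mathcal{A}>0$ be rational and let $t_1,t_2\in T_\mathcal{A}\cap(0,1)$. Define \[t_3=\left(\frac{\sqrt{t_2(1-t_1^2)}+\sqrt{t_1(1-t_2^2)}}{1+t_1t_2}\right)^2,\] with positive real square roots. Then $t_3$ is rational, $t_3\in T_\mathcal{A}$, and both $(1+t_1)(1+t_2)(1+t_3)$ and $(1-t_1)(1-t_2)(1-t_3)$ are squares of rational numbers.
   Context: $T_\mathcal{A}=\{t\in\mathbb Q:\ t(1-t^2)=\mathcal{A}r^2 \text{ for some } r\in\mathbb Q\}$. An element $t\in T_\mathcal{A}\cap(0,1)$ is the parameter of the rational right triangle with sides $(1-t^2,2t,1+t^2)$, whose area $t(1-t^2)$ equals $\mathcal{A}$ times a rational square. *)

From HB Require Import structures.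
From mathcomp Require Import all_boot all_order all_algebra.
Set Implicit Arguments. Unset Strict Implicit. Unset Printing Implicit Defensive.
Import Order.TTheory GRing.Theory Num.Theory.
Local Open Scope ring_scope.

Definition T_A (A t : rat) : Prop := exists r : rat, t * (1 - t ^+ 2) = A * r ^+ 2.

Definition is_rat_square (q : rat) : Prop := exists r : rat, q = r ^+ 2.

From HB Require Import structures.
From mathcomp Require Import all_boot all_order all_algebra.
From mathcomp Require Import ring lra.
Set Implicit Arguments.
Unset Strict Implicit.
Unset Printing Implicit Defensive.

Import Order.TTheory GRing.Theory Num.Theory.
Local Open Scope ring_scope.

(* Writing x = t2 (1 - t1^2), y = t1 (1 - t2^2) and D = 1 + t1 t2, the product
   x y = t1 (1 - t1^2) t2 (1 - t2^2) is A^2 times a rational square, so sqrt(x y) = s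
   is rational and t3 = (x + y + 2 s) / D^2 is rational.  Using only s^2 = x y, the
   quantities x t3, (1 + t1)(1 + t2)(1 + t3) and (1 - t1)(1 - t2)(1 - t3) are the
   squares of (x + s)/D, ((1 + t1)(1 + t2) + s)/D and ((1 - t1)(1 - t2) - s)/D.
   Multiplying the three, t3 (1 - t3^2) is a square divided by
   x (1 - t1^2)(1 - t2^2) = (1 - t1^2)^2 t2 (1 - t2^2), i.e. A times a square. *)

Definition tsum (F : fieldType) (t1 t2 s : F) : F :=
  (t2 * (1 - t1 ^+ 2) + t1 * (1 - t2 ^+ 2) + 2 * s) / (1 + t1 * t2) ^+ 2.

Section TsumSquares.

Variables (F : fieldType) (t1 t2 s : F).
Hypothesis s_sqr : s ^+ 2 = t1 * (1 - t1 ^+ 2) * (t2 * (1 - t2 ^+ 2)).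
Hypothesis D_neq0 : 1 + t1 * t2 != 0.

Local Notation q := (tsum t1 t2 s).
Local Notation x := (t2 * (1 - t1 ^+ 2)).
Local Notation D := (1 + t1 * t2).
Local Notation P := ((1 + t1) * (1 + t2)).
Local Notation Q := ((1 - t1) * (1 - t2)).

Lemma mul_tsum_sqr : x * q = ((x + s) / D) ^+ 2.
Proof. by rewrite /tsum expr_div_n [(_ + s) ^+ 2]sqrrD s_sqr; field. Qed.

Lemma mul_1Dtsum_sqr : P * (1 + q) = ((P + s) / D) ^+ 2.
Proof. by rewrite /tsum expr_div_n [(_ + s) ^+ 2]sqrrD s_sqr; field. Qed.

Lemma mul_1Btsum_sqr : Q * (1 - q) = ((Q - s) / D) ^+ 2.
Proof. by rewrite /tsum expr_div_n [(_ - s) ^+ 2]sqrrB s_sqr; field. Qed.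

Lemma mul_tsum_cubic_sqr :
  x * P * Q * (q * (1 - q ^+ 2)) = ((x + s) * (P + s) * (Q - s) / D ^+ 3) ^+ 2.
Proof.
have -> : x * P * Q * (q * (1 - q ^+ 2)) = x * q * (P * (1 + q)) * (Q * (1 - q)).
  by ring.
by rewrite mul_tsum_sqr mul_1Dtsum_sqr mul_1Btsum_sqr; field.
Qed.

End TsumSquares.

Lemma T_A_mul_sqr (A t1 t2 : rat) : T_A A t1 -> T_A A t2 ->
  exists2 s : rat, 0 <= s & s ^+ 2 = t1 * (1 - t1 ^+ 2) * (t2 * (1 - t2 ^+ 2)).
Proof.
move=> [r1 e1] [r2 e2]; exists `|A * r1 * r2|; first exact: normr_ge0.
by rewrite real_normK ?num_real // e1 e2; ring.
Qed.

Lemma T_A_of_scaled_sqr (A k t v : rat) : A != 0 -> k != 0 ->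
  A * k ^+ 2 * (t * (1 - t ^+ 2)) = v ^+ 2 -> T_A A t.
Proof.
move=> A_neq0 k_neq0 e; exists (v / (A * k)).
apply: (@mulfI _ (A * k ^+ 2)); first by rewrite mulf_neq0 ?expf_neq0.
by rewrite e; field; rewrite A_neq0 k_neq0.
Qed.

Lemma T_A_tsum (A t1 t2 s : rat) : A != 0 -> 1 - t1 ^+ 2 != 0 ->
  t2 * (1 - t2 ^+ 2) != 0 ->
  s ^+ 2 = t1 * (1 - t1 ^+ 2) * (t2 * (1 - t2 ^+ 2)) -> 1 + t1 * t2 != 0 ->
  T_A A t2 -> T_A A (tsum t1 t2 s).
Proof.
move=> A_neq0 u1_neq0 w2_neq0 s_sqr D_neq0 [r2 e2].
have r2_neq0 : r2 != 0.
  by apply: contra_neq w2_neq0 => r2_eq0; rewrite e2 r2_eq0 expr0n mulr0.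
have := mul_tsum_cubic_sqr s_sqr D_neq0.
have -> : t2 * (1 - t1 ^+ 2) * ((1 + t1) * (1 + t2)) * ((1 - t1) * (1 - t2))
    = A * ((1 - t1 ^+ 2) * r2) ^+ 2.
  by rewrite exprMn (mulrCA A) -e2; ring.
by apply: T_A_of_scaled_sqr; rewrite ?mulf_neq0.
Qed.

Lemma sqr_add_sqrtr (R : rcfType) (x y s : R) : 0 <= x -> 0 <= y -> 0 <= s ->
  s ^+ 2 = x * y -> (Num.sqrt x + Num.sqrt y) ^+ 2 = x + y + 2 * s.
Proof.
move=> x_ge0 y_ge0 s_ge0 s_sqr.
rewrite sqrrD !sqr_sqrtr // -sqrtrM // -s_sqr sqrtr_sqr ger0_norm //.
by rewrite mulr2n mulr_natl mulr2n addrAC.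
Qed.

Lemma ratr_tsum (R : rcfType) (t1 t2 s : rat) :
  0 <= t2 * (1 - t1 ^+ 2) -> 0 <= t1 * (1 - t2 ^+ 2) -> 0 <= s ->
  s ^+ 2 = t1 * (1 - t1 ^+ 2) * (t2 * (1 - t2 ^+ 2)) ->
  ratr (tsum t1 t2 s) =
    ((Num.sqrt (ratr (t2 * (1 - t1 ^+ 2))) + Num.sqrt (ratr (t1 * (1 - t2 ^+ 2))))
       / ratr (1 + t1 * t2)) ^+ 2 :> R.
Proof.
move=> x_ge0 y_ge0 s_ge0 s_sqr.
have ratr_s_sqr :
    ratr s ^+ 2 = ratr (t2 * (1 - t1 ^+ 2)) * ratr (t1 * (1 - t2 ^+ 2)) :> R.
  by rewrite -rmorphM -rmorphXn s_sqr; congr ratr; ring.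
rewrite expr_div_n (sqr_add_sqrtr _ _ _ ratr_s_sqr) ?ler0q //.
by rewrite /tsum fmorph_div rmorphXn !(rmorphD, rmorphM); ring.
Qed.

Theorem mainTheorem7 (R : rcfType) (A t1 t2 : rat) (hA : 0 < A)
  (h1 : T_A A t1) (h1i : 0 < t1 < 1) (h2 : T_A A t2) (h2i : 0 < t2 < 1) :
  let t3 : R :=
    ((Num.sqrt (ratr (t2 * (1 - t1 ^+ 2))) + Num.sqrt (ratr (t1 * (1 - t2 ^+ 2))))
       / ratr (1 + t1 * t2)) ^+ 2 in
  exists q : rat, [/\ t3 = ratr q, T_A A q,
    is_rat_square ((1 + t1) * (1 + t2) * (1 + q)) &
    is_rat_square ((1 - t1) * (1 - t2) * (1 - q))].
Proof.
move=> t3; have [s s_ge0 s_sqr] := T_A_mul_sqr h1 h2.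
case/andP: h1i => t1_gt0 t1_lt1; case/andP: h2i => t2_gt0 t2_lt1.
have u1_gt0 : 0 < 1 - t1 ^+ 2 by nra.
have u2_gt0 : 0 < 1 - t2 ^+ 2 by nra.
have D_neq0 : 1 + t1 * t2 != 0 by rewrite lt0r_neq0 // addr_gt0 ?mulr_gt0.
exists (tsum t1 t2 s); split.
- by rewrite ratr_tsum // mulr_ge0 ?ltW.
- by apply: T_A_tsum => //; rewrite lt0r_neq0 ?mulr_gt0.
- exists (((1 + t1) * (1 + t2) + s) / (1 + t1 * t2)).
  exact: mul_1Dtsum_sqr.
- exists (((1 - t1) * (1 - t2) - s) / (1 + t1 * t2)).
  exact: mul_1Btsum_sqr.
Qed.
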